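(* Let $X_n$, $Y_n$, $Y$ be as in the context. For every $n\in\mathbb{N}$ and every subgraph $\Gamma$ of $X_n$ there is a coarse $1$-wiring of $\Gamma$ into $Y$ with volume at most $|VY_n|=(2^{2^{2n+1}}f(n)+1)f(n)$.
   Context: Fix a function $f:\mathbb{N}\to\mathbb{N}$ (with $\mathbb{N}=\{1,2,\dots\}$) that is surjective, satisfies $f(1)=1$, $2\leq f(n)\leq n$ for all $n\geq 2$, and $|f^{-1}(k)|=\infty$ for every $k\geq 2$. For $n\in\mathbb{N}$ let $X_n$ be the graph with vertex set $\{0,1,\dots,f(n)-1\}\times\{0,1,\dots,2^{2^{2n}}f(n)\}$, with edges $(i,j)(i,j+1)$ for all $0\leq i\leq f(n)-1$, $0\leq j\leq 2^{2^{2n}}f(n)-1$, and $(i,j)(i+1,j)$ for all $0\leq i\leq f(n)-2$ and all $j$ that are multiples of $2^{2^{2n}}$. Let $Y_n$ be defined in the same way with $2^{2^{2n}}$ replaced everywhere by $2^{2^{2n+1}}$. Let $Y=\bigsqcup_{n\geq1}Y_n$. A wiring of a finite graph $\Gamma$ into $Y$ is a continuous map sending vertices to vertices and each edge onto a union of edges (a path between the images of its endpoints, or a single vertex if these coincide); it is a coarse $k$-wiring if each vertex of $Y$ has at most $k$ preimage vertices and each edge of $Y$ lies in the images of at most $k$ edges of $\Gamma$; its volume is the number of vertices of its image. *)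

From mathcomp Require Import all_boot.
Set Implicit Arguments. Unset Strict Implicit. Unset Printing Implicit Defensive.

(* Conditions on f : N -> N (N = {1,2,...}; the value f 0 is irrelevant). *)
Definition admissible_f (f : nat -> nat) : Prop :=
  [/\ (forall k, 1 <= k -> exists n, 1 <= n /\ f n = k),
      f 1 = 1,
      (forall n, 2 <= n -> 2 <= f n <= n) &
      (forall k, 2 <= k -> forall N, exists n, N <= n /\ f n = k)].

(* The "ladder" graph with spacing a and b rails:
   vertices {0..b-1} x {0..a*b},
   edges (i,j)(i,j+1) and (i,j)(i+1,j) when a divides j. *)
Definition ladderV (a b : nat) (x : nat * nat) : bool :=
  (x.1 < b) && (x.2 <= a * b).

Definition ladderE (a b : nat) (x y : nat * nat) : bool :=
  [&& ladderV a b x, ladderV a b y &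
     ((x.1 == y.1) && ((x.2.+1 == y.2) || (y.2.+1 == x.2)))
  || [&& x.2 == y.2, a %| x.2 & (x.1.+1 == y.1) || (y.1.+1 == x.1)]].

Definition spX (n : nat) : nat := 2 ^ (2 ^ (2 * n)).
Definition spY (n : nat) : nat := 2 ^ (2 ^ (2 * n).+1).

Definition XV f n := ladderV (spX n) (f n).
Definition XE f n := ladderE (spX n) (f n).
Definition YnV f n := ladderV (spY n) (f n).
Definition YnE f n := ladderE (spY n) (f n).

(* Y = disjoint union over m >= 1 of Y_m; a vertex (m, v) is v in copy Y_m. *)
Definition Yvert := (nat * (nat * nat))%type.
Definition YV f (y : Yvert) : bool := (1 <= y.1) && YnV f y.1 y.2.
Definition YE f (y z : Yvert) : bool :=
  [&& 1 <= y.1, y.1 == z.1 & YnE f y.1 y.2 z.2].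

Definition cardVYn f n : nat := (spY n * f n + 1) * f n.

(* Gamma = (GV, GE) is a subgraph of X_n; GE is a symmetric adjacency relation,
   an (unordered) edge {u,v} of Gamma being a pair with GE u v. *)
Definition subgraph_X f n (GV : pred (nat * nat)) (GE : rel (nat * nat)) : Prop :=
  [/\ (forall u, GV u -> XV f n u),
      (forall u v, GE u v -> [&& GV u, GV v & XE f n u v]) &
      (forall u v, GE u v -> GE v u)].

(* p is a path (no repeated vertices) in Y from a to b, given as its
   vertex sequence starting at a. *)
Definition Ypath f (a b : Yvert) (p : seq Yvert) : Prop :=
  [/\ head a p = a, size p > 0, path (YE f) a (behead p),
      last a (behead p) = b & uniq p].

Definition steps (p : seq Yvert) : seq (Yvert * Yvert) := zip p (behead p).

Definition share_edge (p q : seq Yvert) : Prop :=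
  exists a b, (a, b) \in steps p /\ ((a, b) \in steps q \/ (b, a) \in steps q).

(* A coarse 1-wiring of Gamma into Y: phi on vertices, and for each edge
   {u,v} a path wp u v in Y from phi u to phi v (wp v u being the reverse). *)
Definition coarse_1_wiring f (GV : pred (nat * nat)) (GE : rel (nat * nat))
    (phi : nat * nat -> Yvert) (wp : nat * nat -> nat * nat -> seq Yvert) : Prop :=
  [/\ (forall u, GV u -> YV f (phi u)),
      (forall u v, GE u v -> Ypath f (phi u) (phi v) (wp u v)),
      (forall u v, GE u v -> wp v u = rev (wp u v)),
      (* each vertex of Y has at most 1 preimage vertex *)
      (forall u v, GV u -> GV v -> phi u = phi v -> u = v) &
      (* each edge of Y lies in the image of at most 1 edge of Gamma *)
      (forall u v u' v', GE u v -> GE u' v' ->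
         ~ ((u = u' /\ v = v') \/ (u = v' /\ v = u')) ->
         ~ share_edge (wp u v) (wp u' v'))].

(* volume = number of vertices of the image; "at most N" *)
Definition volume_le (GV : pred (nat * nat)) (GE : rel (nat * nat))
    (phi : nat * nat -> Yvert) (wp : nat * nat -> nat * nat -> seq Yvert)
    (N : nat) : Prop :=
  exists s : seq Yvert, size s <= N /\
    (forall y, ((exists u, GV u /\ phi u = y)
                \/ (exists u v, GE u v /\ y \in wp u v)) -> y \in s).

From mathcomp Require Import all_boot zify.

(* The wiring rescales X_n vertically by s = 2^(2^(2n)) into the copy Y_n:
   (i, j) goes to (i, j s).  Rungs of X_n sit on rows j with s | j, so they
   land on rows divisible by s^2, which are exactly the rungs of Y_n; a rail
   edge of X_n becomes the rail segment of length s between the images of its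
   endpoints.  Each step of such an image determines its edge of X_n (column,
   and lower row divided by s), so images of distinct edges share no edge, and
   everything lies in Y_n. *)

Set Implicit Arguments.
Unset Strict Implicit.
Unset Printing Implicit Defensive.

Lemma ladderE_cases a b u v : ladderE a b u v ->
  [/\ ladderV a b u, ladderV a b v &
   if u.1 == v.1 then (u.2.+1 == v.2) || (v.2.+1 == u.2)
   else [&& u.2 == v.2, a %| u.2 & (u.1.+1 == v.1) || (v.1.+1 == u.1)]].
Proof.
case/and3P=> Vu Vv E; split=> //; move: E.
case: (a %| u.2) (a %| v.2) => -[]; case: eqP; lia.
Qed.

Lemma ladderE_neq a b u v : ladderE a b u v -> u != v.
Proof. by case/ladderE_cases=> _ _; apply: contraTneq => ->; rewrite eqxx; lia. Qed.

Lemma ladderE_sym a b : symmetric (ladderE a b).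
Proof.
move=> x y; rewrite /ladderE andbCA; congr [&& _, _ & _].
case: x y => [x1 x2] [y1 y2] /=.
by case: (x2 =P y2) => [->|]; rewrite ?andbF; lia.
Qed.

Lemma YE_sym f : symmetric (YE f).
Proof.
move=> y z; rewrite /YE /YnE eq_sym.
by case: eqP => [->|]; rewrite ?andbF // ladderE_sym.
Qed.

Lemma Ypath_rev f a b p : Ypath f a b p -> Ypath f b a (rev p).
Proof.
case: p => [[_ //]|x p [/= -> _ pth <- up]].
have Erev : rev (a :: p) = last a p :: rev (belast a p).
  by rewrite lastI rev_rcons.
split; rewrite ?rev_uniq // Erev //=.
- by rewrite rev_path; apply: sub_path pth => y z; rewrite YE_sym.
- by rewrite -(last_cons (last a p)) -Erev rev_cons last_rcons.
Qed.

Lemma mem_steps (p : seq Yvert) a b : ((a, b) \in steps p) = infix [:: a; b] p.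
Proof.
elim: p => [|x [|y p] IHp] //; rewrite /steps /= in IHp *.
- by rewrite andbF.
- by rewrite in_cons -IHp xpair_eqE prefix0s andbT.
Qed.

Lemma mem_steps_rev (p : seq Yvert) a b :
  ((a, b) \in steps (rev p)) = ((b, a) \in steps p).
Proof. by rewrite !mem_steps -infix_revLR. Qed.

Lemma steps_path (e : rel Yvert) x s a b :
  path e x s -> (a, b) \in steps (x :: s) -> e a b.
Proof.
move=> pth; rewrite mem_steps => /infix_sorted/(_ pth) /=.
by rewrite andbT.
Qed.

Definition vrun n c k l : seq Yvert := [seq (n, (c, j)) | j <- iota k l.+1].

Definition upstep (y z : Yvert) : bool := z == (y.1, (y.2.1, y.2.2.+1)).

Lemma mem_vrun n c k l y :
  (y \in vrun n c k l) = [&& y.1 == n, y.2.1 == c & k <= y.2.2 <= k + l].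
Proof.
case: y => y1 [y2 y3] /=; apply/mapP/and3P => [[j + [-> -> ->]]|[/eqP-> /eqP-> hy]].
  by rewrite mem_iota addnS ltnS => hj.
by exists y3; rewrite // mem_iota addnS ltnS.
Qed.

Lemma vrun_upstep n c k l : path upstep (n, (c, k)) (behead (vrun n c k l)).
Proof.
rewrite /vrun /= path_map.
elim: l k => //= l IHl k.
by rewrite {1}/relpre /upstep /= eqxx IHl.
Qed.

Lemma last_vrun n c k l : last (n, (c, k)) (behead (vrun n c k l)) = (n, (c, k + l)).
Proof.
rewrite /vrun /= (last_map (fun j => (n, (c, j)))).
by elim: l k => [|l IHl] k /=; rewrite ?addn0 // IHl addSnnS.
Qed.

Lemma steps_vrun n c k l a b : (a, b) \in steps (vrun n c k l) ->
  [/\ a.2.1 = c, b = (a.1, (a.2.1, a.2.2.+1)) & k <= a.2.2 < k + l].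
Proof.
move=> ab; have /eqP eb := steps_path (vrun_upstep n c k l) ab.
have /mem_infix sub : infix [:: a; b] (vrun n c k l) by rewrite -mem_steps.
have := sub a (mem_head _ _); have := sub b (mem_last a [:: b]).
rewrite !mem_vrun eb /= => /and3P[_ _ hb] /and3P[_ /eqP -> /andP[ha _]].
by split=> //; lia.
Qed.

Lemma Ypath_vrun f n c k l : 1 <= n -> c < f n -> k + l <= spY n * f n ->
  Ypath f (n, (c, k)) (n, (c, k + l)) (vrun n c k l).
Proof.
move=> hn hc hkl; split; rewrite ?last_vrun //.
- apply: (@sub_in_path _ (mem (vrun n c k l))) (vrun_upstep n c k l); last first.
    by apply/allP.
  move=> [y1 [y2 y3]] z; rewrite !mem_vrun /upstep /= => /and3P[/eqP-> /eqP-> _].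
  move=> /and3P[_ _ hz] /eqP ez; subst z; simpl in hz.
  rewrite /YE /YnE /ladderE /ladderV /= hn hc !eqxx /=; lia.
- by rewrite map_inj_uniq ?iota_uniq // => i j [].
Qed.

Lemma spX_gt0 n : 0 < spX n.
Proof. by rewrite expn_gt0. Qed.

Lemma spY_spX n : spY n = spX n * spX n.
Proof. by rewrite /spY /spX expnS mulnC expnM expnS expn1. Qed.

Definition embed n (u : nat * nat) : Yvert := (n, (u.1, u.2 * spX n)).

Definition wire n (u v : nat * nat) : seq Yvert :=
  if u.1 == v.1 then
    if u.2 < v.2 then vrun n u.1 (u.2 * spX n) (spX n)
    else rev (vrun n u.1 (v.2 * spX n) (spX n))
  else [:: embed n u; embed n v].

Lemma embed_inj n : injective (embed n).
Proof.
move=> [u1 u2] [v1 v2] [-> /eqP]; rewrite eqn_pmul2r ?spX_gt0 //.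
by move/eqP->.
Qed.

Lemma wire_rev n u v : u != v -> wire n v u = rev (wire n u v).
Proof.
move: u v => [u1 u2] [v1 v2]; rewrite /wire /= xpair_eqE [v1 == u1]eq_sym.
case: eqP => [-> /=|//].
by case: ltngtP; rewrite ?revK.
Qed.

Lemma YV_embed f n u : 1 <= n -> XV f n u -> YV f (embed n u).
Proof.
move=> hn /andP[h1 h2]; rewrite /YV /YnV /ladderV /= hn h1 spY_spX mulnAC.
by rewrite leq_mul2r h2 orbT.
Qed.

Lemma Ypath_embed_up f n c m : 1 <= n -> c < f n -> m < spX n * f n ->
  Ypath f (embed n (c, m)) (embed n (c, m.+1)) (vrun n c (m * spX n) (spX n)).
Proof.
move=> hn hc hm; rewrite /embed /= mulSn addnC.
by apply: Ypath_vrun => //; rewrite addnC -mulSn spY_spX mulnAC leq_mul2r hm orbT.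
Qed.

Lemma Ypath_wire f n u v : 1 <= n -> XE f n u v ->
  Ypath f (embed n u) (embed n v) (wire n u v).
Proof.
move=> hn huv; have [/andP[hu1 hu2] /andP[hv1 hv2]] := ladderE_cases huv.
rewrite /wire; move: u v huv hu1 hu2 hv1 hv2 => [c m] [c' m'] /= huv hu1 hu2 hv1 hv2.
case: eqP => [<-|ne].
- case: ltngtP => cmp /orP[] /eqP em //; try lia; subst.
  + exact: Ypath_embed_up.
  + exact/Ypath_rev/Ypath_embed_up.
- case/and3P=> /eqP <- hd hc; split=> //=; last first.
    by rewrite inE andbT (inj_eq (@embed_inj n)) xpair_eqE; apply/nandP; left; apply/eqP.
  rewrite andbT /YE /= hn eqxx /YnE /=.
  rewrite /ladderE /ladderV /= hu1 hv1 spY_spX mulnAC leq_mul2r hu2 eqxx.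
  by rewrite dvdn_pmul2r ?spX_gt0 // hd hc !orbT.
Qed.

Definition edge_key (u v : nat * nat) : nat * nat * bool :=
  (minn u.1 v.1, minn u.2 v.2, u.1 == v.1).

Definition step_key n (a b : Yvert) : nat * nat * bool :=
  (minn a.2.1 b.2.1, minn a.2.2 b.2.2 %/ spX n, a.2.1 == b.2.1).

Lemma step_keyC n a b : step_key n a b = step_key n b a.
Proof. by rewrite /step_key minnC eq_sym [minn a.2.2 _]minnC. Qed.

Lemma divn_block m d x : m * d <= x < m * d + d -> x %/ d = m.
Proof.
case/andP=> h1 h2; rewrite -(subnKC h1) divnMDl ?divn_small; lia.
Qed.

Lemma step_key_vrun n c m a b :
  (a, b) \in steps (vrun n c (m * spX n) (spX n)) -> step_key n a b = (c, m, true).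
Proof.
case/steps_vrun=> ec -> ha; rewrite /step_key /= ec minnn eqxx.
by rewrite (minn_idPl (leqnSn _)) (divn_block ha).
Qed.

Lemma step_key_wire f n u v a b : XE f n u v ->
  (a, b) \in steps (wire n u v) -> step_key n a b = edge_key u v.
Proof.
case/ladderE_cases=> _ _; rewrite /wire /edge_key.
move: u v => [c m] [c' m'] /=; case: eqP => [<-|ne].
- case: ltngtP => cmp /orP[] /eqP em //; try lia; subst.
  + by move/step_key_vrun->; rewrite minnn.
  + by rewrite mem_steps_rev step_keyC => /step_key_vrun->; rewrite minnn.
- case/and3P=> /eqP <- _ _; rewrite inE => /eqP[-> ->].
  by rewrite /step_key /= !minnn mulnK ?spX_gt0 //; case: eqP.
Qed.

Lemma edge_key_inj a b u v u' v' : ladderE a b u v -> ladderE a b u' v' ->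
  edge_key u v = edge_key u' v' -> (u = u' /\ v = v') \/ (u = v' /\ v = u').
Proof.
case/ladderE_cases=> _ _ huv /ladderE_cases[_ _]; rewrite /edge_key.
move: u v u' v' huv => [c m] [d k] [c' m'] [d' k'] /= huv hu'v' [e1 e2 e3].
suff: (c = c' /\ m = m' /\ d = d' /\ k = k') \/ (c = d' /\ m = k' /\ d = c' /\ k = m').
  by case=> [[-> [-> [-> ->]]]|[-> [-> [-> ->]]]]; [left|right].
move: huv hu'v' e3; case: (c =P d) => [ecd|ncd]; case: (c' =P d') => [ecd'|ncd'] //= + + _.
- by case/orP=> /eqP hk /orP[] /eqP hk'; lia.
- by case/and3P=> /eqP ek _ /orP[] /eqP hd /and3P[/eqP ek' _ /orP[] /eqP hd']; lia.
Qed.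

Lemma wire_share_edge f n u v u' v' : XE f n u v -> XE f n u' v' ->
  share_edge (wire n u v) (wire n u' v') -> (u = u' /\ v = v') \/ (u = v' /\ v = u').
Proof.
move=> huv hu'v' [a [b [ab ab']]]; apply: (edge_key_inj huv hu'v').
rewrite -(step_key_wire huv ab).
case: ab' => [/(step_key_wire hu'v') //|].
by rewrite step_keyC => /(step_key_wire hu'v').
Qed.

Lemma mem_Ypath f a b p y : Ypath f a b p -> YV f a -> y \in p -> YV f y /\ y.1 = a.1.
Proof.
case: p => [[_ //]|x p [/= -> _ pth _ _]].
elim: p a pth => [|z p IHp] a pth ha /predU1P[-> //|hy] //.
case/andP: pth => /and3P[_ /eqP ea hYE] pth.
have hz : YV f z.
  by have [_ hz _] := ladderE_cases hYE; rewrite /YV -ea /YnV hz andbT; case/andP: ha.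
by have [-> ->] := IHp z pth hz hy.
Qed.

Definition Ycopy f n : seq Yvert :=
  [seq (n, (i, j)) | i <- iota 0 (f n), j <- iota 0 (spY n * f n).+1].

Lemma size_Ycopy f n : size (Ycopy f n) = cardVYn f n.
Proof. by rewrite size_allpairs !size_iota /cardVYn mulnC addn1. Qed.

Lemma mem_Ycopy f n y : YV f y -> y.1 = n -> y \in Ycopy f n.
Proof.
case: y => [m [i j]] /and3P[_ hi hj] /= <-.
by apply: (allpairs_f (fun i j => (m, (i, j)))); rewrite mem_iota.
Qed.

Theorem lemma4p1 (f : nat -> nat) (hf : admissible_f f) (n : nat) (hn : 1 <= n)
    (GV : pred (nat * nat)) (GE : rel (nat * nat))
    (hG : subgraph_X f n GV GE) :
  exists (phi : nat * nat -> Yvert) (wp : nat * nat -> nat * nat -> seq Yvert),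
    coarse_1_wiring f GV GE phi wp /\ volume_le GV GE phi wp (cardVYn f n).
Proof.
case: hG => hV hE _.
have XE_GE u v : GE u v -> XE f n u v by case/hE/and3P.
exists (embed n), (wire n); split; first split.
- by move=> u /hV; apply: YV_embed.
- by move=> u v /XE_GE; apply: Ypath_wire.
- by move=> u v /XE_GE /ladderE_neq; apply: wire_rev.
- by move=> u v _ _; apply: embed_inj.
- by move=> u v u' v' /XE_GE huv /XE_GE hu'v' hne /(wire_share_edge huv hu'v').
exists (Ycopy f n); split; first by rewrite size_Ycopy.
move=> y [[u [/hV hu <-]]|[u [v [/XE_GE huv hy]]]].
  by apply: mem_Ycopy (YV_embed hn hu) _.
have [hu _ _] := ladderE_cases huv.
by have [] := mem_Ypath (Ypath_wire hn huv) (YV_embed hn hu) hy; apply: mem_Ycopy.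
Qed.
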